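(* Let $T_1,T_2\in B(H)$ satisfy $\|T_1T_1^*+T_2T_2^*\|\le1$, and let $p(t)=\sum_{j=0}^Nc_jt^j$ be a polynomial in one complex variable. Then $$\|p(T_1)T_2\|\le\Big(\int_{\mathbb T}|p(t)|^2\,dm(t)\Big)^{1/2}=\Big(\sum_{j=0}^N|c_j|^2\Big)^{1/2},$$ where $m$ is normalized Lebesgue measure on the unit circle $\mathbb T$.
   Context: $H$ is a Hilbert space and $\|\cdot\|$ the operator norm on $B(H)$. *)

From HB Require Import structures.
From mathcomp Require Import all_boot all_order all_algebra.
From mathcomp Require Import all_classical all_reals all_analysis.
From mathcomp Require Import complex.
Set Implicit Arguments.
Unset Strict Implicit.
Unset Printing Implicit Defensive.
Import Order.TTheory GRing.Theory Num.Theory.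
Local Open Scope ring_scope.
Local Open Scope classical_set_scope.

Section Hilbert.
Variable R : realType.
Variable V : lmodType (complex R).
Variable ip : V -> V -> complex R.

Definition hnorm (x : V) : R := Num.sqrt (complex.Re (ip x x)).

Definition is_hilbert : Prop :=
  [/\ (forall (a : complex R) (x y z : V), ip (a *: x + y) z = a * ip x z + ip y z),
      (forall x y : V, ip y x = conjc (ip x y)),
      (forall x : V, complex.Im (ip x x) = 0 /\ 0 <= complex.Re (ip x x)),
      (forall x : V, ip x x = 0 -> x = 0)
    & (forall u : nat -> V,
         (forall e : R, 0 < e -> exists N : nat, forall m n : nat,
            (N <= m)%N -> (N <= n)%N -> hnorm (u m - u n) < e) ->
         exists l : V, forall e : R, 0 < e -> exists N : nat, forall n : nat,
            (N <= n)%N -> hnorm (u n - l) < e)].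

Definition bounded_op (T : V -> V) : Prop :=
  (forall (a : complex R) (x y : V), T (a *: x + y) = a *: T x + T y) /\
  exists M : R, forall x : V, hnorm (T x) <= M * hnorm x.

Definition is_adjoint (T S : V -> V) : Prop :=
  forall x y : V, ip (T x) y = ip x (S y).

Definition opnorm (T : V -> V) : R :=
  sup [set hnorm (T x) | x in [set x : V | hnorm x <= 1]].

Definition poly_op (p : {poly complex R}) (T : V -> V) : V -> V :=
  fun x => \sum_(j < size p) p`_j *: iter j T x.
End Hilbert.

Definition expi (R : realType) (t : R) : complex R := Complex (cos t) (sin t).

From HB Require Import structures.
From mathcomp Require Import all_boot all_order all_algebra.
From mathcomp Require Import all_classical all_reals all_analysis.
From mathcomp Require Import complex.
From mathcomp Require Import ring lra.
Import Order.TTheory GRing.Theory Num.Theory.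
Import numFieldNormedType.Exports.
Local Open Scope ring_scope.
Local Open Scope classical_set_scope.
Set Implicit Arguments.
Unset Strict Implicit.

(* Parseval: |p(e^{it})|^2 = sum_{j,k} Re (c_j conj(c_k) e^{i(j-k)t}), and every term
   with j <> k has a 2pi-periodic primitive, so integration over [0, 2pi] keeps only
   the diagonal sum_j |c_j|^2.
   Operator bound: writing T1s, T2s for the adjoints, <(T1 T1s + T2 T2s) w, w> <= |w|^2
   reads |T1s w|^2 + |T2s w|^2 <= |w|^2, which telescopes along w = T1s^j z to
   sum_j |T2s T1s^j z|^2 <= |z|^2.  For z = p(T1) T2 x, two applications of
   Cauchy-Schwarz give |z|^2 = sum_j Re <c_j x, T2s T1s^j z>
   <= |x| (sum_j |c_j|^2)^(1/2) |z|. *)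

Local Notation normc := ComplexField.Normc.normc.
Local Notation Re := complex.Re.
Local Notation Im := complex.Im.

Lemma normc_sqr (R : rcfType) (z : complex R) : normc z ^+ 2 = Re z ^+ 2 + Im z ^+ 2.
Proof. by case: z => u v /=; rewrite sqr_sqrtr // addr_ge0 ?sqr_ge0. Qed.

Lemma normc_ge0 (R : rcfType) (z : complex R) : 0 <= normc z.
Proof. by case: z => u v; exact: sqrtr_ge0. Qed.

Section Parseval.
Variable R : realType.
Implicit Types (a b d t x : R) (w : complex R).

Definition wave a b d t : R := a * cos (d * t) + b * sin (d * t).

Lemma is_derive_wave a b d x :
  is_derive x 1 (wave a b d) (wave (d * b) (- (d * a)) d x).
Proof.
have lin : is_derive x 1 (fun t : R => d * t) d.
  by apply: is_derive_eq (is_deriveZ d (is_derive_id x 1)) _; rewrite /GRing.scale /= mulr1.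
have := is_deriveD (is_deriveZ a (is_derive1_comp (is_derive_cos (d * x)) lin))
                   (is_deriveZ b (is_derive1_comp (is_derive_sin (d * x)) lin)).
by move=> /is_derive_eq; apply; rewrite /wave /GRing.scale /=; ring.
Qed.

Lemma continuous_of_is_derive (f f' : R -> R) :
  (forall x, is_derive x 1 f (f' x)) -> continuous f.
Proof. by move=> df x; apply/differentiable_continuous/derivable1_diffP; case: (df x). Qed.

(* [harmonic w d t = Re (w * expi (d * t))] *)
Definition harmonic w d : R -> R := wave (Re w) (- Im w) d.

Definition harmonic_primitive w d : R -> R :=
  if d == 0 then fun t => Re w * t else wave (Im w / d) (Re w / d) d.

Lemma is_derive_harmonic_primitive w d x :
  is_derive x 1 (harmonic_primitive w d) (harmonic w d x).
Proof.
rewrite /harmonic_primitive /harmonic; have [->|d0] := eqVneq d 0.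
  apply: is_derive_eq (is_deriveZ (Re w) (is_derive_id x 1)) _.
  by rewrite /wave /GRing.scale /= !mul0r cos0 sin0 !mulr1 mulr0 addr0.
by apply: is_derive_eq (is_derive_wave _ _ _ x) _; rewrite /wave; field.
Qed.

Lemma sin_nat_2pi (m : nat) : sin (m%:R * (2 * pi)) = 0 :> R.
Proof.
by rewrite mulr_natl (mulr_natl pi 2) -[_ *+ m]add0r (periodicn (@sinD2pi R)) sin0.
Qed.

Lemma cos_nat_2pi (m : nat) : cos (m%:R * (2 * pi)) = 1 :> R.
Proof.
by rewrite mulr_natl (mulr_natl pi 2) -[_ *+ m]add0r (periodicn (@cosD2pi R)) cos0.
Qed.

Lemma harmonic_primitive_2pi w (j k : nat) :
  harmonic_primitive w (j%:R - k%:R) (2 * pi) - harmonic_primitive w (j%:R - k%:R) 0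
  = if j == k then Re w * (2 * pi) else 0.
Proof.
rewrite /harmonic_primitive subr_eq0 eqr_nat; case: eqP => _.
  by rewrite mulr0 subr0.
rewrite /wave !mulr0 sin0 cos0 !mulrBl sinB cosB !sin_nat_2pi !cos_nat_2pi; ring.
Qed.

Lemma expiX t (j : nat) : expi t ^+ j = expi (j%:R * t).
Proof.
elim: j => [|j IH]; first by rewrite expr0 mul0r /expi sin0 cos0.
rewrite exprSr IH /expi /= -natr1 mulrDl mul1r cosD sinD.
by apply/eqP; rewrite eq_complex /=; apply/andP; split; apply/eqP; ring.
Qed.

Lemma normc_horner_expi_sqr (p : {poly complex R}) t :
  normc p.[expi t] ^+ 2 = \sum_(j < size p) \sum_(k < size p)
    harmonic (p`_j * conjc p`_k) (j%:R - k%:R) t.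
Proof.
rewrite normc_sqr horner_coef !raddf_sum /= !expr2 !mulr_suml -big_split /=.
apply: eq_bigr => j _; rewrite !mulr_sumr -big_split /=; apply: eq_bigr => k _.
rewrite !expiX /harmonic /wave !mulrBl cosB sinB.
by case: (p`_j) => a1 b1; case: (p`_k) => a2 b2 /=; ring.
Qed.

Lemma is_derive_sum_fun n (f : 'I_n -> R -> R) (df : 'I_n -> R) x :
  (forall i, is_derive x 1 (f i) (df i)) ->
  is_derive x 1 (fun t => \sum_(i < n) f i t) (\sum_(i < n) df i).
Proof. by move=> h; have := is_derive_sum h; rewrite fct_sumE. Qed.

Lemma integral_cc_is_derive (f F : R -> R) a b : a < b -> continuous f ->
  (forall x, is_derive x 1 F (f x)) ->
  (\int[lebesgue_measure]_(x in [set` `[a, b]]) (f x)%:E = (F b - F a)%:E)%E.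
Proof.
move=> ab cf dF.
have cF := continuous_of_is_derive dF.
rewrite (_ : [set` _] = `[a, b]); last by apply/seteqP; split=> y; rewrite /= in_setE.
rewrite EFinB; apply: continuous_FTC2 => //.
- exact: continuous_subspaceT.
- split; first by move=> x _; case: (dF x).
  + exact: cvg_at_right_filter (cF a).
  + exact: cvg_at_left_filter (cF b).
- by move=> x _; rewrite derive1E (derive_val (is_derive:=dF x)).
Qed.

Theorem parseval_poly (p : {poly complex R}) :
  (((2 * pi)^-1)%R%:E *
    \int[lebesgue_measure]_(t in [set` `[0%R, (2 * pi)%R]]) (normc p.[expi t] ^+ 2)%:E
   = (\sum_(j < size p) normc p`_j ^+ 2)%:E)%E.
Proof.
pose c j k := p`_j * conjc p`_k; pose d (j k : nat) : R := j%:R - k%:R.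
pose F t := \sum_(j < size p) \sum_(k < size p) harmonic_primitive (c j k) (d j k) t.
have dF x : is_derive x 1 F (normc p.[expi x] ^+ 2).
  rewrite normc_horner_expi_sqr; apply: is_derive_sum_fun => j.
  by apply: is_derive_sum_fun => k; exact: is_derive_harmonic_primitive.
have cf : continuous (fun t => normc p.[expi t] ^+ 2).
  rewrite (funext (normc_horner_expi_sqr p)); apply: continuous_of_is_derive => x.
  by apply: is_derive_sum_fun => j; apply: is_derive_sum_fun => k.
have pi2_gt0 : (0 : R) < 2 * pi by rewrite mulr_gt0 // pi_gt0.
rewrite (integral_cc_is_derive pi2_gt0 cf dF) /F -sumrB.
rewrite (eq_bigr (fun j : 'I_(size p) => Re (c j j) * (2 * pi))); last first.
  move=> j _; rewrite -sumrB (eq_bigr (fun k : 'I__ => if k == j then Re (c j j) * (2 * pi) else 0)).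
    by rewrite -big_mkcond big_pred1_eq.
  by move=> k _; rewrite harmonic_primitive_2pi -val_eqE eq_sym; case: eqVneq => // ->.
rewrite -EFinM -mulr_suml mulrCA mulVf ?mulr1 ?mulf_neq0 ?gt_eqF ?pi_gt0 //.
by congr _%:E; apply: eq_bigr => j _; rewrite normc_sqr /c; case: (p`_j) => u v /=; ring.
Qed.
End Parseval.

Lemma le_of_sqr_le_mul (R : realDomainType) (a b : R) :
  0 <= a -> 0 <= b -> a ^+ 2 <= a * b -> a <= b.
Proof. move=> *; nra. Qed.

Lemma le_sqrtM_of_quadratic_ge0 (R : rcfType) (A B C : R) : 0 <= A -> 0 <= B ->
  (forall a b : R, 0 <= a ^+ 2 * A - 2 * a * b * C + b ^+ 2 * B) ->
  C <= Num.sqrt A * Num.sqrt B.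
Proof.
move=> A0 B0 q_ge0; have [C_le0|C_gt0] := lerP C 0.
  by apply: le_trans C_le0 _; rewrite mulr_ge0 ?sqrtr_ge0.
have C2_le : C ^+ 2 <= A * B.
  have [A_eq0|A_neq0] := eqVneq A 0.
    (* for A = 0 the form is linear in a, hence negative somewhere unless C <= 0 *)
    have BC : (B + 1) / C * C = B + 1 by rewrite mulfVK ?gt_eqF.
    have := q_ge0 ((B + 1) / C) 1; rewrite A_eq0; nra.
  have A_gt0 : 0 < A by rewrite lt_def A_neq0 A0.
  have := q_ge0 C A; nra.
by rewrite -sqrtrM // -(ger0_norm (ltW C_gt0)) -sqrtr_sqr ler_sqrt // mulr_ge0.
Qed.

Lemma sum_mul_le_sqrt (R : rcfType) n (u v : 'I_n -> R) :
  \sum_(j < n) u j * v j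
    <= Num.sqrt (\sum_(j < n) u j ^+ 2) * Num.sqrt (\sum_(j < n) v j ^+ 2).
Proof.
apply: le_sqrtM_of_quadratic_ge0; try by apply: sumr_ge0 => j _; exact: sqr_ge0.
move=> a b; rewrite (_ : _ + _ = \sum_(j < n) (a * u j - b * v j) ^+ 2).
  by apply: sumr_ge0 => j _; exact: sqr_ge0.
by rewrite !mulr_sumr -sumrB -big_split /=; apply: eq_bigr => j _; ring.
Qed.

Section InnerProduct.
Variables (R : realType) (V : lmodType (complex R)) (ip : V -> V -> complex R).
Hypothesis hH : is_hilbert ip.
Local Notation N := (hnorm ip).
Implicit Types (a : complex R) (x y z : V).

Lemma ipC x y : ip y x = conjc (ip x y).
Proof. by case: hH. Qed.

Lemma ip_self x : Im (ip x x) = 0 /\ 0 <= Re (ip x x).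
Proof. by case: hH. Qed.

Lemma ip_self_eq0 x : ip x x = 0 -> x = 0.
Proof. by case: hH => _ _ _ + _; apply. Qed.

Lemma ipDl x y z : ip (x + y) z = ip x z + ip y z.
Proof. by case: hH => lin _ _ _ _; rewrite -[x in LHS]scale1r lin mul1r. Qed.

Lemma ip0l z : ip 0 z = 0.
Proof. by apply: (addrI (ip 0 z)); rewrite -ipDl !addr0. Qed.

Lemma ipZl a x z : ip (a *: x) z = a * ip x z.
Proof. by case: hH => lin _ _ _ _; rewrite -[a *: x]addr0 lin ip0l addr0. Qed.

Lemma ipBl x y z : ip (x - y) z = ip x z - ip y z.
Proof. by rewrite ipDl -scaleN1r ipZl mulN1r. Qed.

Lemma ipDr x y z : ip z (x + y) = ip z x + ip z y.
Proof. by rewrite (ipC (x + y)) (ipC x) (ipC y) ipDl rmorphD. Qed.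

Lemma ipZr a x z : ip z (a *: x) = conjc a * ip z x.
Proof. by rewrite (ipC (a *: x)) (ipC x) ipZl rmorphM. Qed.

Lemma ipBr x y z : ip z (x - y) = ip z x - ip z y.
Proof. by rewrite (ipC (x - y)) (ipC x) (ipC y) ipBl rmorphB. Qed.

Lemma ip_suml n (f : 'I_n -> V) z : ip (\sum_(j < n) f j) z = \sum_(j < n) ip (f j) z.
Proof. exact: (big_morph (fun x => ip x z) (fun x y => ipDl x y z) (ip0l z)). Qed.

Lemma Re_ipC x y : Re (ip y x) = Re (ip x y).
Proof. by rewrite ipC; case: (ip x y). Qed.

Lemma hnorm_ge0 x : 0 <= N x.
Proof. exact: sqrtr_ge0. Qed.

Lemma hnorm_sqr x : N x ^+ 2 = Re (ip x x).
Proof. by rewrite sqr_sqrtr //; case: (ip_self x). Qed.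

Lemma hnorm_eq0 x : N x = 0 -> x = 0.
Proof.
move=> Nx0; apply: ip_self_eq0; have := hnorm_sqr x; rewrite Nx0 expr0n /=.
by case: (ip_self x); case: (ip x x) => u v /= -> _ <-.
Qed.

Lemma hnorm0 : N 0 = 0.
Proof. by rewrite /hnorm ip0l sqrtr0. Qed.

Lemma Re_ip_le x y : Re (ip x y) <= N x * N y.
Proof.
apply: le_sqrtM_of_quadratic_ge0; [by case: (ip_self x) | by case: (ip_self y) |].
move=> a b; set v := Complex a 0 *: x - Complex b 0 *: y.
have -> : a ^+ 2 * Re (ip x x) - 2 * a * b * Re (ip x y) + b ^+ 2 * Re (ip y y)
          = Re (ip v v).
  rewrite !ipBl !ipBr !ipZl !ipZr (ipC y x).
  by case: (ip x x) => ? ?; case: (ip y x) => ? ?; case: (ip y y) => ? ? /=; ring.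
by case: (ip_self v).
Qed.

Lemma hnormD x y : N (x + y) <= N x + N y.
Proof.
rewrite -ler_sqr ?nnegrE ?addr_ge0 ?hnorm_ge0 // hnorm_sqr ipDl !ipDr !raddfD /=.
by rewrite (Re_ipC x y) -!hnorm_sqr; have := Re_ip_le x y; nra.
Qed.

Lemma hnormZ a x : N (a *: x) = normc a * N x.
Proof.
apply/eqP; rewrite -(eqrXn2 (n := 2)) ?mulr_ge0 ?normc_ge0 ?hnorm_ge0 //.
rewrite exprMn !hnorm_sqr ipZl ipZr normc_sqr.
case: (ip_self x); case: (ip x x) => u v /= -> _.
by case: a => s t /=; apply/eqP; ring.
Qed.

Lemma eq0_ip_r d : (forall w, ip w d = 0) -> d = 0.
Proof. by move=> d_orth; apply: ip_self_eq0; exact: d_orth. Qed.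

Lemma bounded_opD T x y : bounded_op ip T -> T (x + y) = T x + T y.
Proof. by case=> lin _; rewrite -[x in LHS]scale1r lin scale1r. Qed.

Lemma bounded_op0 T : bounded_op ip T -> T 0 = 0.
Proof. by move=> hT; apply: (addrI (T 0)); rewrite -bounded_opD // !addr0. Qed.

Lemma bounded_opZ T a x : bounded_op ip T -> T (a *: x) = a *: T x.
Proof.
by move=> hT; have [lin _] := hT; rewrite -[a *: x]addr0 lin bounded_op0 // addr0.
Qed.

Lemma bounded_op_ge0_bound T : bounded_op ip T ->
  exists2 M, 0 <= M & forall x, N (T x) <= M * N x.
Proof.
case=> _ [M hM]; exists (Num.max M 0) => [|x]; first by rewrite le_max lexx orbT.
by apply: le_trans (hM x) _; rewrite ler_wpM2r ?hnorm_ge0 // le_max lexx.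
Qed.

Lemma bounded_op_comp T S : bounded_op ip T -> bounded_op ip S ->
  bounded_op ip (fun x => T (S x)).
Proof.
move=> hT hS; split=> [a x y|]; first by case: hS => -> _; rewrite bounded_opD // bounded_opZ.
have [MT MT0 hMT] := bounded_op_ge0_bound hT; have [MS _ hMS] := bounded_op_ge0_bound hS.
by exists (MT * MS) => x; apply: le_trans (hMT _) _; rewrite -mulrA ler_wpM2l.
Qed.

Lemma bounded_op_add T S : bounded_op ip T -> bounded_op ip S ->
  bounded_op ip (fun x => T x + S x).
Proof.
move=> hT hS; split=> [a x y|].
  by case: hT => -> _; case: hS => -> _; rewrite scalerDr addrACA.
case: hT => _ [MT hMT]; case: hS => _ [MS hMS].
by exists (MT + MS) => x; rewrite mulrDl; apply: le_trans (hnormD _ _) (lerD _ _).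
Qed.

Lemma adjoint_bounded_op T Ts : bounded_op ip T -> is_adjoint ip T Ts ->
  bounded_op ip Ts.
Proof.
move=> hT hTs; split=> [a x y|].
  apply/eqP; rewrite -subr_eq0; apply/eqP/eq0_ip_r => w.
  by rewrite ipBr -hTs ipDr ipZr !hTs ipDr ipZr subrr.
have [M M0 hM] := bounded_op_ge0_bound hT; exists M => y.
apply: le_of_sqr_le_mul; rewrite ?mulr_ge0 ?hnorm_ge0 //.
rewrite hnorm_sqr -hTs; apply: le_trans (Re_ip_le _ _) _.
by rewrite mulrCA mulrA ler_wpM2r ?hnorm_ge0.
Qed.

Lemma ip_iter_adjoint T Ts : is_adjoint ip T Ts ->
  forall j x y, ip (iter j T x) y = ip x (iter j Ts y).
Proof. by move=> hTs; elim=> [//|j IH] x y; rewrite iterS hTs IH -iterSr. Qed.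

Lemma hnorm_le_opnorm T : bounded_op ip T -> forall x, N (T x) <= opnorm ip T * N x.
Proof.
move=> hT x; have [M M0 hM] := bounded_op_ge0_bound hT.
have [Nx0|Nx_neq0] := eqVneq (N x) 0.
  by rewrite (hnorm_eq0 Nx0) bounded_op0 // hnorm0 mulr0.
have Nx_gt0 : 0 < N x by rewrite lt_def Nx_neq0 hnorm_ge0.
pose u := Complex (N x)^-1 0 *: x.
have normc_inv : normc (Complex (N x)^-1 0) = (N x)^-1.
  by rewrite /= expr0n addr0 sqrtr_sqr ger0_norm // invr_ge0 ltW.
have : N (T u) <= opnorm ip T.
  apply: ub_le_sup; last by exists u; rewrite //= hnormZ normc_inv mulVf.
  exists M => _ [y Ny_le1 <-]; apply: le_trans (hM y) _.
  by rewrite -[leRHS]mulr1 ler_wpM2l.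
by rewrite bounded_opZ // hnormZ normc_inv ler_pdivrMl // mulrC.
Qed.

Section RowContraction.
Variables T1 T2 T1s T2s : V -> V.
Hypotheses (hT1 : bounded_op ip T1) (hT2 : bounded_op ip T2)
  (hT1s : is_adjoint ip T1 T1s) (hT2s : is_adjoint ip T2 T2s)
  (hnorm1 : opnorm ip (fun x => T1 (T1s x) + T2 (T2s x)) <= 1).

Lemma hnorm_adjoint_sqr_le w : N (T1s w) ^+ 2 + N (T2s w) ^+ 2 <= N w ^+ 2.
Proof.
have hA : bounded_op ip (fun x => T1 (T1s x) + T2 (T2s x)) :=
  bounded_op_add (bounded_op_comp hT1 (adjoint_bounded_op hT1 hT1s))
                 (bounded_op_comp hT2 (adjoint_bounded_op hT2 hT2s)).
rewrite (hnorm_sqr (T1s w)) (hnorm_sqr (T2s w)) -hT1s -hT2s -raddfD -ipDl /=.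
apply: le_trans (Re_ip_le _ _) _; rewrite expr2 ler_wpM2r ?hnorm_ge0 //.
apply: le_trans (hnorm_le_opnorm hA w) _.
by rewrite -[leRHS]mul1r ler_wpM2r ?hnorm_ge0.
Qed.

Lemma sum_hnorm_adjoint_iter_le n z :
  \sum_(j < n) N (T2s (iter j T1s z)) ^+ 2 + N (iter n T1s z) ^+ 2 <= N z ^+ 2.
Proof.
elim: n => [|n IH]; first by rewrite big_ord0 add0r.
apply: le_trans IH; rewrite big_ord_recr /= -addrA lerD2l addrC.
exact: hnorm_adjoint_sqr_le.
Qed.

Lemma Re_ip_poly_op (p : {poly complex R}) x z :
  Re (ip (poly_op p T1 (T2 x)) z)
  = \sum_(j < size p) Re (ip (p`_j *: x) (T2s (iter j T1s z))).
Proof.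
rewrite /poly_op ip_suml raddf_sum; apply: eq_bigr => j _.
by rewrite !ipZl (ip_iter_adjoint hT1s) hT2s.
Qed.

Lemma hnorm_poly_op_le (p : {poly complex R}) x :
  N (poly_op p T1 (T2 x)) <= Num.sqrt (\sum_(j < size p) normc p`_j ^+ 2) * N x.
Proof.
set z := poly_op p T1 (T2 x); set S := \sum_(j < size p) _.
have le_sum : N z ^+ 2
    <= N x * \sum_(j < size p) normc p`_j * N (T2s (iter j T1s z)).
  rewrite hnorm_sqr Re_ip_poly_op mulr_sumr; apply: ler_sum => j _.
  by apply: le_trans (Re_ip_le _ _) _; rewrite hnormZ mulrAC mulrC.
have le_CS : \sum_(j < size p) normc p`_j * N (T2s (iter j T1s z)) <= Num.sqrt S * N z.
  apply: le_trans (sum_mul_le_sqrt _ _) _; rewrite ler_wpM2l ?sqrtr_ge0 //.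
  rewrite -(ger0_norm (hnorm_ge0 z)) -sqrtr_sqr ler_sqrt ?sqr_ge0 //.
  by apply: le_trans (sum_hnorm_adjoint_iter_le (size p) z); rewrite lerDl sqr_ge0.
apply: le_of_sqr_le_mul; rewrite ?mulr_ge0 ?sqrtr_ge0 ?hnorm_ge0 //.
by have := hnorm_ge0 x; nra.
Qed.

End RowContraction.
End InnerProduct.

Theorem mainTheorem19 (R : realType) (V : lmodType (complex R))
  (ip : V -> V -> complex R) (hH : is_hilbert ip)
  (T1 T2 T1s T2s : V -> V)
  (hT1 : bounded_op ip T1) (hT2 : bounded_op ip T2)
  (hT1s : is_adjoint ip T1 T1s) (hT2s : is_adjoint ip T2 T2s)
  (hnorm1 : opnorm ip (fun x => T1 (T1s x) + T2 (T2s x)) <= 1)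
  (p : {poly complex R}) :
  let sumc := \sum_(j < size p) (ComplexField.Normc.normc p`_j) ^+ 2 in
  (((2 * pi)^-1)%R%:E *
    \int[lebesgue_measure]_(t in [set` `[0%R, (2 * pi)%R]])
        ((ComplexField.Normc.normc p.[expi t]) ^+ 2)%:E = sumc%:E)%E
  /\ opnorm ip (fun x => poly_op p T1 (T2 x)) <= Num.sqrt sumc.
Proof.
move=> sumc; split; first exact: parseval_poly.
apply: ge_sup; first by exists (hnorm ip (poly_op p T1 (T2 0))), 0; rewrite //= hnorm0.
move=> _ [x Nx_le1 <-]; apply: le_trans (hnorm_poly_op_le hH hT1 hT2 hT1s hT2s hnorm1 p x) _.
by rewrite -[leRHS]mulr1 ler_wpM2l ?sqrtr_ge0.
Qed.
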